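(* Let $R$ be a semisimple 2-primal ring. Then $R$ satisfies the complete radical formula if and only if $R$ satisfies the radical formula.
   Context: Rings are associative with identity; modules are unital left modules. $R$ is semisimple if ${}_RR$ is a direct sum of simple submodules; 2-primal if its set of nilpotent elements equals its prime radical. For an $R$-module $M$: a submodule $P$ is prime if $RM\not\subseteq P$ and for every ideal $A$ of $R$ and submodule $K$ with $AK\subseteq P$, $K\subseteq P$ or $AM\subseteq P$; completely prime if $RM\not\subseteq P$ and $rm\in P$ implies $m\in P$ or $rM\subseteq P$. $\beta^s(N)$ (resp. $\beta^s_{co}(N)$) is the intersection of all prime (resp. completely prime) submodules containing $N$ ($=M$ if none). $E_M(N)=\{rm: r^km\in N\text{ for some }k\in\mathbb N\}$, $\langle E_M(N)\rangle$ the submodule generated. $R$ satisfies the radical formula (resp. complete radical formula) if for every $R$-module $M$ and every submodule $N$, $\langle E_M(N)\rangle=\beta^s(N)$ (resp. $=\beta^s_{co}(N)$). *)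

(* Rings: R : pzRingType (associative, with identity, possibly
   the zero ring); modules: M : lmodType R (unital left R-modules).
   Subsets are Prop-valued predicates. *)
From mathcomp Require Import all_boot all_algebra.
Set Implicit Arguments. Unset Strict Implicit. Unset Printing Implicit Defensive.
Import GRing.Theory.
Local Open Scope ring_scope.

Definition pset (T : Type) := T -> Prop.
Definition psubset (T : Type) (A B : pset T) := forall x, A x -> B x.

Section Defs.
Variable R : pzRingType.

Section Mod.
Variable M : lmodType R.

Definition is_submodule (N : pset M) : Prop :=
  [/\ N 0, (forall x y, N x -> N y -> N (x + y))
    & (forall (r : R) x, N x -> N (r *: x))].

Definition span (S : pset M) : pset M :=
  fun m => forall N, is_submodule N -> psubset S N -> N m.

Definition prodIM (A : pset R) (K : pset M) : pset M :=
  span (fun m => exists a k, [/\ A a, K k & m = a *: k]).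

Definition fullM : pset M := fun _ => True.
End Mod.

Definition is_ideal (I : pset R) : Prop :=
  [/\ I 0, (forall x y, I x -> I y -> I (x + y))
    & (forall r x, I x -> I (r * x) /\ I (x * r))].

Definition fullR : pset R := fun _ => True.

Section Mod2.
Variable M : lmodType R.

Definition prime_submodule (P : pset M) : Prop :=
  [/\ is_submodule P,
      ~ psubset (prodIM fullR (@fullM M)) P
    & forall (A : pset R) (K : pset M), is_ideal A -> is_submodule K ->
        psubset (prodIM A K) P -> psubset K P \/ psubset (prodIM A (@fullM M)) P].

Definition completely_prime_submodule (P : pset M) : Prop :=
  [/\ is_submodule P,
      ~ psubset (prodIM fullR (@fullM M)) P
    & forall (r : R) (m : M), P (r *: m) ->
        P m \/ psubset (fun x => exists m', x = r *: m') P].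

(* beta^s(N) and beta^s_co(N); an empty intersection is M *)
Definition beta_s (N : pset M) : pset M :=
  fun m => forall P, prime_submodule P -> psubset N P -> P m.
Definition beta_s_co (N : pset M) : pset M :=
  fun m => forall P, completely_prime_submodule P -> psubset N P -> P m.

(* E_M(N) = { r m : r^k m \in N for some k in N } (k >= 1) *)
Definition E_M (N : pset M) : pset M :=
  fun x => exists (r : R) (m : M) (k : nat), x = r *: m /\ N (r ^+ k.+1 *: m).
End Mod2.

Definition radical_formula : Prop :=
  forall (M : lmodType R) (N : pset M), is_submodule N ->
    span (E_M N) = beta_s N.

Definition complete_radical_formula : Prop :=
  forall (M : lmodType R) (N : pset M), is_submodule N ->
    span (E_M N) = beta_s_co N.

Definition regularR : lmodType R := R^o.

Definition simple_left_ideal (L : pset R) : Prop :=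
  [/\ @is_submodule regularR L, exists x, L x /\ x <> 0
    & forall L' : pset R, @is_submodule regularR L' -> psubset L' L ->
        (forall x, L' x -> x = 0) \/ psubset L L'].

(* R is semisimple: _R R is an (internal) direct sum of simple submodules *)
Definition semisimple_ring : Prop :=
  exists (I : Type) (L : I -> pset R),
    [/\ forall i, simple_left_ideal (L i),
        (forall x : R, @span regularR (fun y => exists i, L i y) x)
      & forall i x, L i x ->
          @span regularR (fun y => exists j, j <> i /\ L j y) x -> x = 0].

Definition nilpotentR (x : R) : Prop := exists n : nat, x ^+ n = 0.

Definition prime_ideal (P : pset R) : Prop :=
  [/\ is_ideal P, ~ psubset fullR P
    & forall A B, is_ideal A -> is_ideal B ->
        (forall a b, A a -> B b -> P (a * b)) -> psubset A P \/ psubset B P].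

Definition prime_radical : pset R :=
  fun x => forall P, prime_ideal P -> P x.

Definition two_primal : Prop := forall x : R, nilpotentR x <-> prime_radical x.

End Defs.

From mathcomp Require Import all_boot all_algebra.
From Stdlib Require Import Classical FunctionalExtensionality PropExtensionality.
Set Implicit Arguments. Unset Strict Implicit. Unset Printing Implicit Defensive.
Import GRing.Theory.
Local Open Scope ring_scope.

(** In a semisimple 2-primal ring the nilpotent elements form an ideal, and a
   nilpotent [n] kills every minimal left ideal [L] from the left (otherwise
   [L = R n z] and [z = (a n)^k z = 0]); since [1] lies in the sum of the
   minimal left ideals, [n = 0], i.e. [R] is reduced.  In a reduced ring
   idempotents are central and each minimal left ideal is [R e] for such an
   idempotent, which yields [r R ⊆ R r] for every [r]: [R] is left duo.  Then
   [R r] is a two-sided ideal, and primeness applied to [R r] and [R m] shows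
   that prime submodules are completely prime; the converse always holds.
   Hence [beta_s = beta_s_co] and the two radical formulas coincide. *)

Definition reduced_ring (R : pzRingType) : Prop :=
  forall x : R, x * x = 0 -> x = 0.

Definition left_duo (R : pzRingType) : Prop :=
  forall r y : R, exists t, r * y = t * r.

Section Submodules.
Variables (R : pzRingType) (M : lmodType R).

Lemma span_gen (S : pset M) x : S x -> span S x.
Proof. by move=> Sx N _; apply. Qed.

Lemma span_min (S N : pset M) :
  is_submodule N -> psubset S N -> psubset (span S) N.
Proof. by move=> subN SN x; apply. Qed.

Lemma prodIM_gen (A : pset R) (K : pset M) a k :
  A a -> K k -> prodIM A K (a *: k).
Proof. by move=> Aa Kk; apply: span_gen; exists a, k. Qed.

Lemma prodIM_min (A : pset R) (K P : pset M) : is_submodule P ->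
  (forall a k, A a -> K k -> P (a *: k)) -> psubset (prodIM A K) P.
Proof. by move=> subP AKP; apply: span_min => // _ [a [k [Aa Kk ->]]]; apply: AKP. Qed.

Definition cyclic_submodule (m : M) : pset M := fun w => exists a, w = a *: m.

Lemma cyclic_submodule_submod m : is_submodule (cyclic_submodule m).
Proof.
split; first by exists 0; rewrite scale0r.
  by move=> _ _ [a ->] [b ->]; exists (a + b); rewrite scalerDl.
by move=> r _ [a ->]; exists (r * a); rewrite scalerA.
Qed.

End Submodules.

Lemma scale_regularE (R : pzRingType) (r x : R) : r *: (x : regularR R) = r * x.
Proof. by []. Qed.

Definition left_multiples (R : pzRingType) (x : R) : pset R :=
  fun w => exists a, w = a * x.

Lemma left_multiples_submod (R : pzRingType) (x : R) :
  @is_submodule _ (regularR R) (left_multiples x).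
Proof.
split; first by exists 0; rewrite mul0r.
  by move=> _ _ [a ->] [b ->]; exists (a + b); rewrite mulrDl.
by move=> r _ [a ->]; exists (r * a); rewrite scale_regularE mulrA.
Qed.

Lemma semisimple_left_ideal_ind (R : pzRingType) : semisimple_ring R ->
  forall T : pset R, @is_submodule _ (regularR R) T ->
  (forall L, simple_left_ideal L -> psubset L T) -> forall x, T x.
Proof.
move=> [I [L [simL spanL _]]] T subT LT x.
by apply: (span_min subT) (spanL x) => y [i Ly]; apply: LT (simL i) _ Ly.
Qed.

Section SimpleLeftIdeal.
Variables (R : pzRingType) (L : pset R).
Hypothesis simL : simple_left_ideal L.

Lemma simple_left_ideal_mull a x : L x -> L (a * x).
Proof. by case: simL => [[_ _ LZ] _ _]; apply: LZ. Qed.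

Lemma simple_left_ideal_sub0 (L' : pset R) x :
  @is_submodule _ (regularR R) L' -> psubset L' L -> L x -> ~ L' x ->
  forall y, L' y -> y = 0.
Proof.
case: simL => _ _ minL subL' L'L Lx L'x.
by case: (minL L' subL' L'L) => // /(_ x Lx).
Qed.

Lemma simple_left_ideal_cyclic x : L x -> x != 0 ->
  forall z, L z -> exists a, z = a * x.
Proof.
move=> Lx /eqP x_neq0; case: simL => _ _ minL.
have RxL : psubset (left_multiples x) L.
  by move=> _ [a ->]; apply: simple_left_ideal_mull.
case: (minL _ (left_multiples_submod x) RxL) => [/(_ x) x0 | LRx].
  by case: x_neq0; apply: x0; exists 1; rewrite mul1r.
by move=> z /LRx.
Qed.

End SimpleLeftIdeal.

Section ReducedRing.
Variable R : pzRingType.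
Hypothesis redR : reduced_ring R.

Lemma reduced_idempotent_central (e : R) : e * e = e -> forall y, e * y = y * e.
Proof.
move=> ee y.
have eCe : (1 - e) * e = 0 by rewrite mulrBl mul1r ee subrr.
have eeC : e * (1 - e) = 0 by rewrite mulrBr mulr1 ee subrr.
have /redR : e * y * (1 - e) * (e * y * (1 - e)) = 0.
  by rewrite !mulrA -(mulrA _ (1 - e) e) eCe mulr0 !mul0r.
have /redR : (1 - e) * y * e * ((1 - e) * y * e) = 0.
  by rewrite !mulrA -(mulrA _ e (1 - e)) eeC mulr0 !mul0r.
by rewrite mulrBl mul1r mulrBr mulr1 mulrBl => /subr0_eq -> /subr0_eq.
Qed.

Lemma reduced_simple_left_ideal_idempotent (L : pset R) : simple_left_ideal L ->
  exists e, [/\ L e, e * e = e & forall z, L z -> z * e = z].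
Proof.
move=> simL; have [[L0 LD LZ] [x [Lx x_neq0]] _] := simL.
have xx_neq0 : x * x != 0 by apply/eqP => /redR.
have [a xE] := simple_left_ideal_cyclic simL (simple_left_ideal_mull simL x Lx)
  xx_neq0 Lx.
have Le : L (a * x) by apply: simple_left_ideal_mull.
have exE : a * x * x = x by rewrite -mulrA -xE.
pose Annx := fun w => L w /\ w * x = 0.
have subAnnx : @is_submodule _ (regularR R) Annx.
  split; first by split; rewrite ?mul0r.
    move=> w1 w2 [L1 w1x0] [L2 w2x0].
    by split; [apply: LD | rewrite mulrDl w1x0 w2x0 addr0].
  by move=> r w [Lw wx0]; split; [apply: LZ | rewrite -mulrA wx0 mulr0].
have annx0 : forall w, L w -> w * x = 0 -> w = 0.
  move=> w Lw wx0; apply: (simple_left_ideal_sub0 simL subAnnx _ Lx) => //.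
    by move=> ? [].
  by case=> _ /redR.
have ee : a * x * (a * x) = a * x.
  apply/eqP; rewrite -subr_eq0; apply/eqP/annx0.
    by apply: LD; [apply: simple_left_ideal_mull | rewrite -mulN1r; apply: LZ].
  by rewrite mulrBl -mulrA !exE subrr.
exists (a * x); split => // z Lz.
have e_neq0 : a * x != 0 by apply/eqP => ax0; apply: x_neq0; rewrite -exE ax0 mul0r.
by have [t ->] := simple_left_ideal_cyclic simL Le e_neq0 Lz; rewrite -mulrA ee.
Qed.

Lemma reduced_simple_left_ideal_duo (L : pset R) : simple_left_ideal L ->
  forall r z, L z -> exists t, r * z = t * r.
Proof.
move=> simL r z Lz.
have [e [Le ee zeE]] := reduced_simple_left_ideal_idempotent simL.
have eC := reduced_idempotent_central ee.
have [re0 | re_neq0] := eqVneq (r * e) 0.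
  by exists 0; rewrite mul0r -(zeE z Lz) -eC mulrA re0 mul0r.
have [t ->] := simple_left_ideal_cyclic simL (simple_left_ideal_mull simL r Le)
  re_neq0 (simple_left_ideal_mull simL r Lz).
by exists (t * e); rewrite -eC !mulrA.
Qed.

Lemma semisimple_reduced_left_duo : semisimple_ring R -> left_duo R.
Proof.
move=> ssR.
(* The extra factor [a] makes [T] closed under left multiplication. *)
pose T := fun y : R => forall a r, exists t, r * (a * y) = t * r.
have subT : @is_submodule _ (regularR R) T.
  split; first by move=> a r; exists 0; rewrite !mulr0 mul0r.
    move=> y1 y2 T1 T2 a r; have [t1 e1] := T1 a r; have [t2 e2] := T2 a r.
    by exists (t1 + t2); rewrite !mulrDr e1 e2 mulrDl.
  by move=> b y Ty a r; rewrite [a * _]mulrA; apply: Ty.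
have LT : forall L, simple_left_ideal L -> psubset L T.
  move=> L simL z Lz a r.
  exact: reduced_simple_left_ideal_duo simL r _ (simple_left_ideal_mull simL a Lz).
move=> r y; have [t] := semisimple_left_ideal_ind ssR subT LT 1 y r.
by rewrite mulr1; exists t.
Qed.

End ReducedRing.

Section TwoPrimal.
Variable R : pzRingType.
Hypothesis twoR : two_primal R.

Lemma two_primal_nilpotent_mull (a n : R) : nilpotentR n -> nilpotentR (a * n).
Proof.
move=> /twoR radn; apply/twoR => P primeP.
by have [[_ _ /(_ a n (radn P primeP)) []]] := primeP.
Qed.

Lemma two_primal_nilpotent_mulr (a n : R) : nilpotentR n -> nilpotentR (n * a).
Proof.
move=> /twoR radn; apply/twoR => P primeP.
by have [[_ _ /(_ a n (radn P primeP)) []]] := primeP.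
Qed.

Lemma semisimple_two_primal_reduced : semisimple_ring R -> reduced_ring R.
Proof.
move=> ssR.
pose T := fun y : R => forall n, nilpotentR n -> n * y = 0.
have subT : @is_submodule _ (regularR R) T.
  split; first by move=> n _; rewrite mulr0.
    by move=> y1 y2 T1 T2 n nn; rewrite mulrDr T1 // T2 // addr0.
  move=> r y Ty n nn; rewrite scale_regularE mulrA Ty //.
  exact: two_primal_nilpotent_mulr.
have LT : forall L, simple_left_ideal L -> psubset L T.
  move=> L simL z Lz n nn; have [// | nz_neq0] := eqVneq (n * z) 0.
  have [a za] := simple_left_ideal_cyclic simL (simple_left_ideal_mull simL n Lz)
    nz_neq0 Lz.
  have [k ank0] := two_primal_nilpotent_mull a nn.
  have zE : forall j, z = (a * n) ^+ j * z.
    by elim=> [|j IH]; rewrite ?expr0 ?mul1r // exprSr -!mulrA -za.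
  by move: nz_neq0; rewrite (zE k) ank0 mul0r mulr0 eqxx.
move=> x xx0; have := semisimple_left_ideal_ind ssR subT LT 1 x.
by rewrite mulr1; apply; exists 2%N; rewrite expr2.
Qed.

End TwoPrimal.

Section PrimeSubmodules.
Variables (R : pzRingType) (M : lmodType R) (P : pset M).

Lemma completely_prime_submodule_prime :
  completely_prime_submodule P -> prime_submodule P.
Proof.
case=> subP notRM cpP; split => // A K _ _ AKP.
case: (classic (psubset K P)) => [KP | notKP]; first by left.
have [k notKPk] := not_all_ex_not _ _ notKP.
have [Kk _] := imply_to_and _ _ notKPk.
right; apply: prodIM_min => // a m Aa _.
have [|//|] := cpP a k; first by apply: AKP; apply: prodIM_gen.
by apply; exists m.
Qed.

Lemma left_duo_prime_submodule_completely_prime :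
  left_duo R -> prime_submodule P -> completely_prime_submodule P.
Proof.
move=> duoR [subP notRM primeP]; split => // r m Prm.
have [_ _ PZ] := subP.
have idealRr : is_ideal (left_multiples r).
  have [Rr0 RrD _] := left_multiples_submod r.
  split=> // s _ [a ->]; split; first by exists (s * a); rewrite mulrA.
  by have [t rs] := duoR r s; exists (a * t); rewrite -mulrA rs mulrA.
have RrRmP : psubset (prodIM (left_multiples r) (cyclic_submodule m)) P.
  apply: prodIM_min => // _ _ [b ->] [y ->].
  have [t ry] := duoR r y.
  by rewrite scalerA -mulrA ry mulrA -scalerA; apply: PZ.
case: (primeP _ _ idealRr (cyclic_submodule_submod m) RrRmP) => [RmP | RrMP].
  by left; apply: RmP; exists 1; rewrite scale1r.
right=> _ [m' ->]; apply: RrMP; apply: prodIM_gen => //.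
by exists 1; rewrite mul1r.
Qed.

End PrimeSubmodules.

Lemma left_duo_beta_s_co (R : pzRingType) (M : lmodType R) (N : pset M) :
  left_duo R -> beta_s N = beta_s_co N.
Proof.
move=> duoR; rewrite /beta_s /beta_s_co.
have -> // : @prime_submodule R M = @completely_prime_submodule R M.
apply: functional_extensionality => P; apply: propositional_extensionality.
split; [exact: left_duo_prime_submodule_completely_prime |
        exact: completely_prime_submodule_prime].
Qed.

Theorem proposition4p25 (R : pzRingType) :
  semisimple_ring R -> two_primal R ->
  (complete_radical_formula R <-> radical_formula R).
Proof.
move=> ssR twoR.
have duoR := semisimple_reduced_left_duo (semisimple_two_primal_reduced twoR ssR) ssR.
by split=> rad M N subN; rewrite (rad M N subN) left_duo_beta_s_co.
Qed.
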